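(* Let $F=\mathbb{F}_{2^8}$, $V=F^{16}$, let $\mathsf M$ be the AES mixing layer and $t$ its order in $\mathrm{GL}(V)$, and let $\alpha:V\to(\mathbb{F}_2)^{4096t}$, $\alpha(v)=(\varepsilon(v),\varepsilon(\mathsf Mv),\dots,\varepsilon(\mathsf M^{t-1}v))$. Let $\mathcal G$ be the subgroup of $\mathrm{Sym}(V)$ generated by $\tilde{\mathcal G}$, $\bar{\mathcal G}$ and $\mathsf M$. Then $\alpha$ is a space embedding with respect to $\mathcal G$: for every $\sigma\in\mathcal G$ there exists $A_\sigma\in\mathrm{GL}((\mathbb{F}_2)^{4096t})$ with $\alpha\circ\sigma=A_\sigma\circ\alpha$.
   Context: $F=\mathbb{F}_2[x]/(x^8+x^4+x^3+x+1)$; write $\bar x$ for the class of $x$. $V=F^{16}$ is viewed as an $\mathbb{F}_2$-space of dimension 128, with elements $(s_0,\dots,s_{15})$. ShiftRows is $(s_0,\dots,s_{15})\mapsto(s_0,s_5,s_{10},s_{15},s_4,s_9,s_{14},s_3,s_8,s_{13},s_2,s_7,s_{12},s_1,s_6,s_{11})$. MixColumns replaces each column $(s_{4c},s_{4c+1},s_{4c+2},s_{4c+3})^T$, $c=0,1,2,3$, by $C(s_{4c},\dots,s_{4c+3})^T$ with $C=\begin{pmatrix}\bar x&\bar x+1&1&1\\1&\bar x&\bar x+1&1\\1&1&\bar x&\bar x+1\\\bar x+1&1&1&\bar x\end{pmatrix}$. The AES mixing layer is $\mathsf M=\text{MixColumns}\circ\text{ShiftRows}$ (ShiftRows applied first).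 Let $\gamma$ be a primitive element of $F$, $e_1,\dots,e_{256}$ the standard basis of $(\mathbb{F}_2)^{256}$, $\varepsilon':F\to(\mathbb{F}_2)^{256}$ given by $\varepsilon'(0)=e_1$, $\varepsilon'(\gamma^i)=e_{i+1}$ ($1\le i\le255$), and $\varepsilon(y_1,\dots,y_{16})=(\varepsilon'(y_1),\dots,\varepsilon'(y_{16}))\in(\mathbb{F}_2)^{4096}$. $\tilde{\mathcal G}$ is the set of maps $(y_1,\dots,y_{16})\mapsto(ay_1+c,\dots,ay_{16}+c)$ with $a\in F\setminus\{0\}$, $c\in F$; $\bar{\mathcal G}$ is the set of translations $v\mapsto v+d$, $d\in V$. *)

From HB Require Import structures.
From mathcomp Require Import all_boot all_order all_algebra all_fingroup.
Set Implicit Arguments. Unset Strict Implicit. Unset Printing Implicit Defensive.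
Import GRing.Theory.
Local Open Scope ring_scope.

(* F = F_2[x]/(x^8+x^4+x^3+x+1): an element is its reduced representative
   a_0 + a_1 x + ... + a_7 x^7, stored as the coefficient row (a_0..a_7). *)
Definition F := 'rV['F_2]_8.

Definition aes_poly : {poly 'F_2} := 'X^8 + 'X^4 + 'X^3 + 'X + 1.
Definition to_poly (a : F) : {poly 'F_2} := \poly_(i < 8) a ord0 (inord i).
Definition of_poly (p : {poly 'F_2}) : F := \row_(i < 8) (modp p aes_poly)`_i.

Definition mulF (a b : F) : F := of_poly (to_poly a * to_poly b).
Definition oneF : F := of_poly 1.
Definition xbar : F := of_poly 'X.
Definition expF (a : F) (n : nat) : F := iter n (mulF a) oneF.

Definition primitiveF (g : F) : Prop :=
  expF g 255 = oneF /\ forall k : nat, (0 < k < 255)%N -> expF g k <> oneF.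

Definition V := {ffun 'I_16 -> F}.

Definition Cmat (r k : nat) : F :=
  match ((k + 4 - r) %% 4)%N with
  | 0%N => xbar
  | 1%N => of_poly ('X + 1)
  | _ => oneF
  end.

Definition shiftRows (s : V) : V :=
  [ffun i : 'I_16 => s (inord (4 * (((i %/ 4) + (i %% 4)) %% 4) + (i %% 4)))].

Definition mixColumns (s : V) : V :=
  [ffun i : 'I_16 => \sum_(k < 4)
      mulF (Cmat (i %% 4) k) (s (inord (4 * (i %/ 4) + k)))].

Definition Mlayer (s : V) : V := mixColumns (shiftRows s).

Definition is_order_M (t : nat) : Prop :=
  (0 < t)%N /\ (forall v, iter t Mlayer v = v) /\
  (forall k, (0 < k < t)%N -> exists v, iter k Mlayer v <> v).

(* epsilon' : F -> F_2^256, with 0-based index j: eps'(0) = e_0,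
   eps'(gamma^j) = e_j for 1 <= j <= 255 *)
Definition eps_coord (g : F) (y : F) (j : nat) : 'F_2 :=
  (if j == 0%N then y == 0 else y == expF g j)%:R.

(* alpha(v) = (eps(v), eps(Mv), ..., eps(M^{t-1} v)) in F_2^(4096 t);
   coordinate n = 4096 k + 256 i + j refers to eps'((M^k v)_i)_j *)
Definition alpha (t : nat) (g : F) (v : V) : 'rV['F_2]_(4096 * t) :=
  \row_(n < 4096 * t)
    eps_coord g ((iter (n %/ 4096) Mlayer v) (inord ((n %% 4096) %/ 256)))
              ((n %% 4096) %% 256).

Definition transl (d : V) (v : V) : V := [ffun i => v i + d i].
Definition affF (a c : F) (v : V) : V := [ffun i => mulF a (v i) + c].

(* generators: bar G (translations), tilde G (y_i -> a y_i + c, a <> 0), and M *)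
Definition gensG : {set {perm V}} :=
  [set s : {perm V} |
     [|| [exists d : V, [forall v : V, s v == transl d v]],
         [exists a : F, exists c : F, (a != 0) && [forall v : V, s v == affF a c v]]
       | [forall v : V, s v == Mlayer v]]].

Definition calG : {set {perm V}} := <<gensG>>%g.

From HB Require Import structures.
From mathcomp Require Import all_boot all_order all_algebra all_fingroup.
From mathcomp Require Import zify.
Set Implicit Arguments. Unset Strict Implicit. Unset Printing Implicit Defensive.
Import GRing.Theory.
Local Open Scope ring_scope.

(* Every generator of G acts on alpha(v) by a permutation of coordinates.
   A translation, or a map y |-> a y + c with a <> 0, acts on each coordinate
   of each M^k v by a bijection of F, and a bijection of F permutes the 256
   one-hot coordinates of eps'.  M shifts the blocks eps(M^k v) cyclically,
   because M^t = 1.  Maps admitting such a linear lift form a group, which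
   therefore contains G. *)

Lemma size_aes_poly : size aes_poly = 9%N.
Proof.
rewrite /aes_poly -!addrA size_polyDl ?size_polyXn //.
apply: leq_ltn_trans (size_polyD _ _) _; rewrite gtn_max size_polyXn /=.
apply: leq_ltn_trans (size_polyD _ _) _; rewrite gtn_max size_polyXn /=.
by apply: leq_ltn_trans (size_polyD _ _) _; rewrite gtn_max size_polyX size_poly1.
Qed.

Lemma aes_poly_neq0 : aes_poly != 0.
Proof. by rewrite -size_poly_gt0 size_aes_poly. Qed.

Lemma to_of_poly p : to_poly (of_poly p) = modp p aes_poly.
Proof.
apply/polyP => i; rewrite coef_poly /of_poly.
case: ifP => hi; first by rewrite mxE inordK.
rewrite nth_default //.
have := ltn_modp p aes_poly; rewrite aes_poly_neq0 size_aes_poly => h.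
by rewrite -ltnS (leq_trans h) // ltnS leqNgt hi.
Qed.

Lemma of_to_poly a : of_poly (to_poly a) = a.
Proof.
apply/rowP => i; rewrite mxE modp_small; last first.
  by rewrite size_aes_poly (leq_ltn_trans (size_poly _ _)).
by rewrite coef_poly ltn_ord inord_val; congr (a _ _); apply/val_inj.
Qed.

Lemma of_poly_mod p : of_poly (modp p aes_poly) = of_poly p.
Proof. by apply/rowP => i; rewrite !mxE modp_id. Qed.

Lemma to_polyD a b : to_poly (a + b) = to_poly a + to_poly b.
Proof.
by apply/polyP => i; rewrite coefD !coef_poly; case: (i < 8)%N; rewrite ?addr0 // mxE.
Qed.

Lemma of_polyD p q : of_poly (p + q) = of_poly p + of_poly q.
Proof. by apply/rowP => i; rewrite !mxE modpD coefD. Qed.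

Lemma to_poly0 : to_poly 0 = 0.
Proof. by apply/polyP => i; rewrite coef_poly coef0 mxE; case: ifP. Qed.

Lemma mulFC a b : mulF a b = mulF b a.
Proof. by rewrite /mulF mulrC. Qed.

Lemma mulFA a b c : mulF a (mulF b c) = mulF (mulF a b) c.
Proof.
have modr p q : of_poly (p * modp q aes_poly) = of_poly (p * q).
  by rewrite -of_poly_mod modp_mul of_poly_mod.
have modl p q : of_poly (modp p aes_poly * q) = of_poly (p * q).
  by rewrite mulrC modr mulrC.
by rewrite /mulF !to_of_poly modr modl mulrA.
Qed.

Lemma mul1F a : mulF oneF a = a.
Proof.
rewrite /mulF /oneF to_of_poly modp_small ?mul1r ?of_to_poly //.
by rewrite size_aes_poly size_poly1.
Qed.

Lemma mulFDr a b c : mulF a (b + c) = mulF a b + mulF a c.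
Proof. by rewrite /mulF to_polyD mulrDr of_polyD. Qed.

Lemma mulF0 a : mulF a 0 = 0.
Proof. by rewrite /mulF to_poly0 mulr0; apply/rowP => i; rewrite !mxE mod0p coef0. Qed.

Lemma mulF_sumr (I : Type) (r : seq I) (P : pred I) (f : I -> F) a :
  mulF a (\sum_(i <- r | P i) f i) = \sum_(i <- r | P i) mulF a (f i).
Proof. exact: (big_morph (mulF a) (mulFDr a) (mulF0 a)). Qed.

Lemma oneF_neq0 : oneF != 0.
Proof.
apply/eqP => /(congr1 to_poly).
rewrite to_poly0 /oneF to_of_poly modp_small ?size_aes_poly ?size_poly1 //.
by move/eqP; rewrite oner_eq0.
Qed.

Lemma expFD a m n : expF a (m + n) = mulF (expF a m) (expF a n).
Proof.
elim: m => [|m IH]; first by rewrite add0n /= mul1F.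
by rewrite addSn /expF /= -/(expF a (m + n)) IH mulFA.
Qed.

Lemma card_F : #|{: F}| = 256%N.
Proof. by rewrite card_mx card_Fp. Qed.

Lemma ord256_inj_onto (f : 'I_256 -> F) : injective f -> forall y, exists j, f j = y.
Proof.
move=> f_inj y; have := inj_card_onto f_inj; rewrite card_F card_ord.
by move=> /(_ (leqnn _) y) /codomP [j ->]; exists j.
Qed.

Definition scV (a : F) (v : V) : V := [ffun i => mulF a (v i)].

Lemma affF_transl a c v : affF a c v = transl [ffun=> c] (scV a v).
Proof. by apply/ffunP => i; rewrite !ffunE. Qed.

Lemma Mlayer_transl d v : Mlayer (transl d v) = transl (Mlayer d) (Mlayer v).
Proof.
apply/ffunP => i; rewrite /Mlayer /mixColumns /shiftRows !ffunE -big_split /=.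
by apply: eq_bigr => k _; rewrite !ffunE mulFDr.
Qed.

Lemma Mlayer_scale a v : Mlayer (scV a v) = scV a (Mlayer v).
Proof.
apply/ffunP => i; rewrite /Mlayer /mixColumns /shiftRows !ffunE mulF_sumr /=.
by apply: eq_bigr => k _; rewrite !ffunE !mulFA (mulFC a).
Qed.

Lemma iter_Mlayer_transl k d v :
  iter k Mlayer (transl d v) = transl (iter k Mlayer d) (iter k Mlayer v).
Proof. by elim: k => //= k ->; rewrite Mlayer_transl. Qed.

Lemma iter_Mlayer_scale k a v : iter k Mlayer (scV a v) = scV a (iter k Mlayer v).
Proof. by elim: k => //= k ->; rewrite Mlayer_scale. Qed.

Section PrimitiveElement.

Variable g : F.
Hypothesis g_prim : primitiveF g.

Definition eps_pt (j : 'I_256) : F := if val j == 0%N then 0 else expF g j.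

Lemma eps_coordE y (j : 'I_256) : eps_coord g y j = (y == eps_pt j)%:R.
Proof. by rewrite /eps_coord /eps_pt; case: (val j == 0%N). Qed.

Lemma expF_neq0 j : (j <= 255)%N -> expF g j != 0.
Proof.
move=> le_j; apply/eqP => gj0; have := expFD g (255 - j) j.
rewrite subnK // gj0 mulF0; case: g_prim => -> _ /eqP.
by rewrite (negbTE oneF_neq0).
Qed.

Lemma expF_inj_lt i j : (0 < i < j)%N -> (j <= 255)%N -> expF g i <> expF g j.
Proof.
move=> lt_ij le_j eq_ij; case: g_prim => g255 /(_ (255 - j + i)%N); apply.
  by lia.
by rewrite expFD eq_ij -expFD subnK.
Qed.

Lemma eps_pt_inj : injective eps_pt.
Proof.
move=> [i lt_i] [j lt_j]; rewrite /eps_pt /=.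
case: eqP => i0; case: eqP => j0 eq_ij; apply/val_inj => /=.
- by rewrite i0 j0.
- by move/eqP: eq_ij; rewrite eq_sym (negbTE (expF_neq0 _)) //; lia.
- by move/eqP: eq_ij; rewrite (negbTE (expF_neq0 _)) //; lia.
case: (ltngtP i j) => // lt.
  by case: (expF_inj_lt _ _ eq_ij); lia.
by case: (expF_inj_lt _ _ (esym eq_ij)); lia.
Qed.

(* Nonzero elements are powers of g, so g^(255-j) inverts g^j. *)
Lemma mulF_inj a : a != 0 -> injective (mulF a).
Proof.
move=> a0; have [j aj] := ord256_inj_onto eps_pt_inj a.
have j0 : val j != 0%N by apply: contra a0; rewrite -aj /eps_pt => ->.
have inv_a : mulF (expF g (255 - j)) a = oneF.
  by rewrite -aj /eps_pt (negbTE j0) -expFD subnK; [case: g_prim | rewrite -ltnS].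
by move=> y z eq_yz; rewrite -(mul1F y) -(mul1F z) -inv_a -!mulFA eq_yz.
Qed.

Lemma eps_reindex (pi : F -> F) : injective pi ->
  {h : 'I_256 -> 'I_256 | injective h &
     forall y j, (pi y == eps_pt j) = (y == eps_pt (h j))}.
Proof.
move=> pi_inj; pose h j := odflt ord0 [pick j' | pi (eps_pt j') == eps_pt j].
have pi_h j : pi (eps_pt (h j)) = eps_pt j.
  have [j' /= pi_j'] := ord256_inj_onto (inj_comp pi_inj eps_pt_inj) (eps_pt j).
  rewrite /h; case: pickP => [x /eqP //|none].
  by have := none j'; rewrite pi_j' eqxx.
exists h => [j1 j2 eq_h|y j]; last by rewrite -pi_h (inj_eq pi_inj).
by apply: eps_pt_inj; rewrite -pi_h eq_h pi_h.
Qed.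

End PrimitiveElement.

Section AlphaCoordinates.

Variable t : nat.
Implicit Types (n : 'I_(4096 * t)) (k : 'I_t) (i : 'I_16) (j : 'I_256).

Lemma alpha_index_subproof k i j : (4096 * k + 256 * i + j < 4096 * t)%N.
Proof. by have := ltn_ord k; have := ltn_ord i; have := ltn_ord j; lia. Qed.

Definition alpha_index k i j : 'I_(4096 * t) := Ordinal (alpha_index_subproof k i j).

Lemma alpha_pow_subproof n : (n %/ 4096 < t)%N.
Proof. by have := ltn_ord n; lia. Qed.

Lemma alpha_cell_subproof n : ((n %% 4096) %/ 256 < 16)%N.
Proof. by lia. Qed.

Definition alpha_pow n : 'I_t := Ordinal (alpha_pow_subproof n).
Definition alpha_cell n : 'I_16 := Ordinal (alpha_cell_subproof n).
Definition alpha_elt n : 'I_256 := Ordinal (@ltn_pmod n 256 isT).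

Lemma alpha_entry g v n :
  alpha t g v 0 n =
  eps_coord g (iter (alpha_pow n) Mlayer v (alpha_cell n)) (alpha_elt n).
Proof.
rewrite mxE; congr (eps_coord _ (_ _) _); last by rewrite /=; lia.
by apply/val_inj; rewrite /= inordK //; lia.
Qed.

Lemma alpha_pow_index k i j : alpha_pow (alpha_index k i j) = k.
Proof. by apply/val_inj => /=; have := ltn_ord i; have := ltn_ord j; lia. Qed.

Lemma alpha_cell_index k i j : alpha_cell (alpha_index k i j) = i.
Proof. by apply/val_inj => /=; have := ltn_ord i; have := ltn_ord j; lia. Qed.

Lemma alpha_elt_index k i j : alpha_elt (alpha_index k i j) = j.
Proof. by apply/val_inj => /=; have := ltn_ord j; lia. Qed.

Lemma alpha_index_digits n :
  alpha_index (alpha_pow n) (alpha_cell n) (alpha_elt n) = n.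
Proof. by apply: ord_inj => /=; lia. Qed.

End AlphaCoordinates.

Lemma row_reindex_unitmx (R : comUnitRingType) N (f : 'I_N -> 'I_N) :
  injective f ->
  exists A : 'M[R]_N, A \in unitmx /\ forall u : 'rV_N, u *m A = \row_n u 0 (f n).
Proof.
move=> f_inj; exists (perm_mx (perm f_inj)^-1); split; first exact: unitmx_perm.
by move=> u; rewrite -col_permE; apply/rowP => n; rewrite !mxE permE.
Qed.

Lemma alpha_lift t g (s : V -> V) (a : 'I_t -> 'I_t)
    (b : 'I_t -> 'I_16 -> 'I_256 -> 'I_256) :
  injective a -> (forall k i, injective (b k i)) ->
  (forall v (k : 'I_t) i (j : 'I_256),
     eps_coord g (iter k Mlayer (s v) i) j =
     eps_coord g (iter (a k) Mlayer v i) (b k i j)) ->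
  exists A : 'M['F_2]_(4096 * t),
    A \in unitmx /\ forall v, alpha t g (s v) = alpha t g v *m A.
Proof.
move=> a_inj b_inj s_eps.
pose f n := alpha_index (a (alpha_pow n)) (alpha_cell n)
                        (b (alpha_pow n) (alpha_cell n) (alpha_elt n)).
have f_inj : injective f.
  move=> n1 n2 eq_f.
  have eq_k : alpha_pow n1 = alpha_pow n2.
    by apply: a_inj; have := congr1 (@alpha_pow t) eq_f; rewrite !alpha_pow_index.
  have eq_i : alpha_cell n1 = alpha_cell n2.
    by have := congr1 (@alpha_cell t) eq_f; rewrite !alpha_cell_index.
  have eq_j : alpha_elt n1 = alpha_elt n2.
    by have := congr1 (@alpha_elt t) eq_f; rewrite !alpha_elt_index eq_k eq_i => /b_inj.
  by rewrite -(alpha_index_digits n1) -(alpha_index_digits n2) eq_k eq_i eq_j.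
have [A [A_unit A_row]] := row_reindex_unitmx 'F_2 f_inj.
exists A; split=> // v; rewrite A_row; apply/rowP => n.
by rewrite alpha_entry mxE alpha_entry s_eps alpha_pow_index alpha_cell_index alpha_elt_index.
Qed.

Lemma coordwise_lift t g (s : V -> V) (pi : nat -> 'I_16 -> F -> F) :
  primitiveF g -> (forall k i, injective (pi k i)) ->
  (forall v k i, iter k Mlayer (s v) i = pi k i (iter k Mlayer v i)) ->
  exists A : 'M['F_2]_(4096 * t),
    A \in unitmx /\ forall v, alpha t g (s v) = alpha t g v *m A.
Proof.
move=> g_prim pi_inj s_pi.
pose h k i := eps_reindex g_prim (pi_inj k i).
apply: (@alpha_lift t g s id (fun k i => s2val (h k i))) => // [k i|v k i j].
  exact: (s2valP (h k i)).
by rewrite s_pi !eps_coordE (s2valP' (h k i)).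
Qed.

Lemma transl_lift t g d : primitiveF g ->
  exists A : 'M['F_2]_(4096 * t),
    A \in unitmx /\ forall v, alpha t g (transl d v) = alpha t g v *m A.
Proof.
move=> g_prim.
apply: (coordwise_lift t (pi := fun k i y => y + iter k Mlayer d i) g_prim).
  by move=> k i; apply: addIr.
by move=> v k i; rewrite iter_Mlayer_transl ffunE.
Qed.

Lemma affF_lift t g a c : primitiveF g -> a != 0 ->
  exists A : 'M['F_2]_(4096 * t),
    A \in unitmx /\ forall v, alpha t g (affF a c v) = alpha t g v *m A.
Proof.
move=> g_prim a_neq0.
pose pi k i y := mulF a y + iter k Mlayer [ffun=> c] i.
apply: (coordwise_lift t (pi := pi) g_prim).
  by move=> k i y z /addIr; exact: (mulF_inj g_prim a_neq0).
by move=> v k i; rewrite affF_transl iter_Mlayer_transl iter_Mlayer_scale !ffunE.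
Qed.

Lemma iter_mod (T : Type) (f : T -> T) t :
  (forall x, iter t f x = x) -> forall m x, iter (m %% t) f x = iter m f x.
Proof.
move=> ft m x; rewrite {2}(divn_eq m t) iterD.
by elim: (m %/ t)%N => //= q IH; rewrite mulSn iterD ft.
Qed.

Lemma Mlayer_lift t g : is_order_M t ->
  exists A : 'M['F_2]_(4096 * t),
    A \in unitmx /\ forall v, alpha t g (Mlayer v) = alpha t g v *m A.
Proof.
case=> _ [Mt _].
apply: (@alpha_lift t g Mlayer (@ordS t) (fun _ _ j => j)) => [|k i //|v k i j].
  exact: ordS_inj.
by rewrite /= iter_mod // iterSr.
Qed.

Definition alpha_lifts t g : {set {perm V}} :=
  [set s : {perm V} | [exists A : 'M['F_2]_(4096 * t),
              (A \in unitmx) && [forall v, alpha t g (s v) == alpha t g v *m A]]].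

Lemma alpha_liftsP t g (s : {perm V}) :
  reflect (exists A : 'M['F_2]_(4096 * t),
             A \in unitmx /\ forall v, alpha t g (s v) = alpha t g v *m A)
          (s \in alpha_lifts t g).
Proof.
rewrite inE; apply: (iffP existsP) => [[A /andP[A_unit /forallP s_A]]|[A [A_unit s_A]]].
  by exists A; split=> // v; apply/eqP.
by exists A; rewrite A_unit; apply/forallP => v; rewrite s_A.
Qed.

Lemma alpha_lifts_group t g : group_set (alpha_lifts t g).
Proof.
apply/group_setP; split.
  by apply/alpha_liftsP; exists 1%:M; rewrite unitmx1; split=> // v; rewrite perm1 mulmx1.
move=> x y /alpha_liftsP[A [A_unit x_A]] /alpha_liftsP[B [B_unit y_B]].
apply/alpha_liftsP; exists (A *m B); rewrite unitmx_mul A_unit B_unit.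
by split=> // v; rewrite permM y_B x_A mulmxA.
Qed.

Lemma gensG_sub_alpha_lifts t g :
  is_order_M t -> primitiveF g -> gensG \subset alpha_lifts t g.
Proof.
move=> M_order g_prim; apply/subsetP => s; rewrite inE.
case/or3P=> [/existsP[d /forallP s_d] | /existsP[a /existsP[c /andP[a_neq0 /forallP s_ac]]]
            | /forallP s_M]; apply/alpha_liftsP.
- have [A [A_unit d_A]] := @transl_lift t g d g_prim.
  by exists A; split=> // v; rewrite (eqP (s_d v)).
- have [A [A_unit ac_A]] := @affF_lift t g a c g_prim a_neq0.
  by exists A; split=> // v; rewrite (eqP (s_ac v)).
- have [A [A_unit M_A]] := Mlayer_lift g M_order.
  by exists A; split=> // v; rewrite (eqP (s_M v)).
Qed.

Theorem mainTheorem10 (t : nat) (g : F) :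
  is_order_M t -> primitiveF g ->
  forall sigma : {perm V}, sigma \in calG ->
  exists A : 'M['F_2]_(4096 * t),
    A \in unitmx /\ forall v : V, alpha t g (sigma v) = alpha t g v *m A.
Proof.
move=> M_order g_prim sigma sigma_G; apply/alpha_liftsP; move: sigma sigma_G.
apply/subsetP; rewrite /calG (gen_subG _ (group (alpha_lifts_group t g))).
exact: gensG_sub_alpha_lifts.
Qed.
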